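(* Let $\mathcal{R}_0>0$ and let $\kappa:[0,1]\to[0,\infty)$ be a non-decreasing function with $\kappa(0)=0$ and $\kappa(i)>0$ for all $i>0$. Consider the initial value problem \[ \frac{ds}{d\tau}=-\mathcal{R}_0\frac{1}{1+\kappa(i)}\,s\,i,\qquad \frac{di}{d\tau}=\Big(\mathcal{R}_0\frac{1}{1+\kappa(i)}\,s-1\Big)i, \] with initial conditions $s(0)=s_0\ge 0$, $i(0)=i_0>0$ (and $r_0\ge 0$ with $s_0+i_0+r_0=1$), satisfying $s_0\mathcal{R}_0>1+\kappa(i_0)$, and assume its solution $(s(\tau),i(\tau))$ is non-negative. Let $(s^0(\tau),i^0(\tau))$ denote the solution of the same initial value problem with $\kappa\equiv 0$ (the classical SIR model $ds/d\tau=-\mathcal{R}_0 s i$, $di/d\tau=(\mathcal{R}_0 s-1)i$) with the same $\mathcal{R}_0$, $s_0$, $i_0$. Let $i_{max}=\max_{\tau\ge 0} i(\tau)$ and $i^0_{max}=\max_{\tau\ge0} i^0(\tau)$. Then \[ i_{max}<i^0_{max}. \]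
   Context: This is the non-dimensional ''feedback SIR'' (fSIR) model: $s$ and $i$ are the fractions of susceptible and infected individuals, $r=1-s-i$ the recovered fraction, $\tau$ is rescaled time, $\mathcal{R}_0$ the basic reproduction number, and $\kappa(i)$ the ''mitigation function'', giving the infection-dependent reproduction number $\mathcal{R}(i)=\mathcal{R}_0/(1+\kappa(i))$. The paper's standing assumptions on $\kappa$ are: non-negative, non-decreasing, $\kappa(0)=0$. *)

From Stdlib Require Import Reals.
From Coquelicot Require Import Coquelicot.
Open Scope R_scope.

Definition fSIR_solution (R0 : R) (kappa : R -> R) (s0 i0 : R)
  (s i : R -> R) : Prop :=
  s 0 = s0 /\ i 0 = i0 /\
  forall t, 0 <= t ->
    is_derive s t (- R0 * (1 / (1 + kappa (i t))) * s t * i t) /\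
    is_derive i t ((R0 * (1 / (1 + kappa (i t))) * s t - 1) * i t).

Definition is_max_on_nonneg (f : R -> R) (m : R) : Prop :=
  exists t, 0 <= t /\ f t = m /\ forall t', 0 <= t' -> f t' <= m.

From Stdlib Require Import Reals Lra Psatz Classical.
From Coquelicot Require Import Coquelicot.
Open Scope R_scope.

(* Along any fSIR solution, V = i + s - ln s / R0 has derivative
   - i kappa(i) / (1 + kappa(i)): it is conserved by the classical model and
   strictly decreasing under mitigation.  Since phi(x) = x - ln x / R0 is
   minimal at x = 1 / R0, i = V - phi(s) <= V - phi(1 / R0), with equality
   exactly when s = 1 / R0.
   The classical susceptibles do reach 1 / R0, so the classical peak is
   V(0) - phi(1 / R0); the mitigated prevalence stays strictly below it at all
   times (at t = 0 because R0 s0 <> 1).  Its maximum is attained since s + i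
   decreases at rate i, which forces i eventually below i0. *)

Lemma is_derive_value (f : R -> R) (x l l' : R) :
  is_derive f x l -> l = l' -> is_derive f x l'.
Proof. now intros Hf <-. Qed.

Lemma is_derive_Rmult (f g : R -> R) (x df dg : R) :
  is_derive f x df -> is_derive g x dg ->
  is_derive (fun t => f t * g t) x (df * g x + f x * dg).
Proof. intros Hf Hg. exact (is_derive_mult f g x df dg Hf Hg Rmult_comm). Qed.

Lemma is_derive_continuity_pt (f : R -> R) (x l : R) :
  is_derive f x l -> continuity_pt f x.
Proof.
  intros Hf. apply continuity_pt_filterlim, (ex_derive_continuous f x). now exists l.
Qed.

Lemma MVT_interval (f df : R -> R) (a b : R) : a <= b ->
  (forall x, a <= x <= b -> is_derive f x (df x)) ->
  exists c, a <= c <= b /\ f b - f a = df c * (b - a).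
Proof.
  intros Hab Hd.
  destruct (MVT_gen f a b df) as [c [Hc Heq]]; rewrite Rmin_left, Rmax_right in * by lra.
  - intros x Hx. apply Hd. lra.
  - intros x Hx. apply (is_derive_continuity_pt f x (df x)), Hd. lra.
  - now exists c.
Qed.

Lemma derive_ge_increment (f df : R -> R) (m a b : R) : a <= b ->
  (forall x, a <= x <= b -> is_derive f x (df x)) ->
  (forall x, a <= x <= b -> m <= df x) -> f a + m * (b - a) <= f b.
Proof.
  intros Hab Hd Hm. destruct (MVT_interval f df a b Hab Hd) as [c [Hc Heq]].
  pose proof (Hm c Hc). nra.
Qed.

Lemma derive_le_increment (f df : R -> R) (m a b : R) : a <= b ->
  (forall x, a <= x <= b -> is_derive f x (df x)) ->
  (forall x, a <= x <= b -> df x <= m) -> f b <= f a + m * (b - a).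
Proof.
  intros Hab Hd Hm. destruct (MVT_interval f df a b Hab Hd) as [c [Hc Heq]].
  pose proof (Hm c Hc). nra.
Qed.

Lemma derive_neg_decreasing (f df : R -> R) (a b : R) : a < b ->
  (forall x, a <= x <= b -> is_derive f x (df x)) ->
  (forall x, a <= x <= b -> df x < 0) -> f b < f a.
Proof.
  intros Hab Hd Hneg. destruct (MVT_interval f df a b (Rlt_le a b Hab) Hd) as [c [Hc Heq]].
  pose proof (Hneg c Hc). nra.
Qed.

Lemma derive_zero_constant (f : R -> R) (a b : R) : a <= b ->
  (forall x, a <= x <= b -> is_derive f x 0) -> f b = f a.
Proof.
  intros Hab Hd. destruct (MVT_interval f (fun _ => 0) a b Hab Hd) as [c [_ Heq]]. lra.
Qed.

(* [f ^ 2 * exp (2 M t)] is nondecreasing, so [f] cannot vanish on [[0, T]]. *)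
Lemma linear_ode_pos (f a : R -> R) (M T : R) :
  (forall t, 0 <= t <= T -> is_derive f t (a t * f t)) ->
  (forall t, 0 <= t <= T -> - M <= a t) -> 0 < f 0 ->
  forall t, 0 <= t <= T -> 0 < f t.
Proof.
  intros Hd Ha Hf0.
  assert (Hnz : forall t, 0 <= t <= T -> f t <> 0).
  { intros t Ht Hft.
    set (g := fun t => f t * f t * exp (2 * M * t)).
    assert (Hg : g 0 + 0 * (t - 0) <= g t).
    { apply (derive_ge_increment g (fun x => 2 * f x * f x * (a x + M) * exp (2 * M * x)));
        [lra | intros x Hx | intros x Hx].
      - eapply is_derive_value.
        + apply is_derive_Rmult; [apply is_derive_Rmult; apply Hd; lra|].
          auto_derive; [exact I | reflexivity].
        + cbv beta. ring.
      - pose proof (Ha x ltac:(lra)). pose proof (exp_pos (2 * M * x)).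
        apply Rmult_le_pos; [|lra]. apply Rmult_le_pos; nra. }
    unfold g in Hg. rewrite Hft, Rmult_0_r, exp_0 in Hg. nra. }
  intros t Ht. destruct (Rtotal_order 0 (f t)) as [Hpos | [Hz | Hneg]]; auto.
  - now destruct (Hnz t Ht).
  - destruct (Ranalysis5.IVT_interv (fun x => - f x) 0 t) as [z [Hz Hfz]]; try lra.
    + intros x Hx. apply continuity_pt_opp, (is_derive_continuity_pt f x (a x * f x)), Hd. lra.
    + destruct (Req_dec t 0) as [-> | Ht0]; lra.
    + destruct (Hnz z); lra.
Qed.

(* [F' = - f] and [F >= 0] bound the integral of [f], while after each visit above [c]
   [f] stays above [c / 2] for time [c / (2 L)], costing [F] at least [c ^ 2 / (4 L)]. *)
Lemma eventually_lt_of_bounded_antiderivative (F f df : R -> R) (L c : R) :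
  0 < L -> 0 < c ->
  (forall t, 0 <= t -> is_derive F t (- f t)) ->
  (forall t, 0 <= t -> is_derive f t (df t)) ->
  (forall t, 0 <= t -> 0 <= f t /\ - L <= df t) ->
  (forall t, 0 <= t -> 0 <= F t) ->
  exists T, 0 <= T /\ forall t, T <= t -> f t < c.
Proof.
  intros HL Hc HdF Hdf Hf HF.
  apply NNPP; intros Hnot.
  assert (Hvisit : forall T, 0 <= T -> exists t, T <= t /\ c <= f t).
  { intros T HT. apply NNPP; intros Hno. apply Hnot. exists T. split; [exact HT|].
    intros t Ht. apply Rnot_le_lt. intros Hct. apply Hno. now exists t. }
  set (h := c / (2 * L)).
  assert (Hh : 0 < h /\ L * h = c / 2) by (unfold h; split; [apply Rdiv_lt_0_compat|field]; lra).
  assert (Hdrop : forall T, 0 <= T -> exists t, 0 <= t /\ F t <= F T - c / 2 * h).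
  { intros T HT. destruct (Hvisit T HT) as [t [HTt Hct]].
    assert (Hhalf : forall x, t <= x <= t + h -> c / 2 <= f x).
    { intros x Hx.
      assert (Hslope : f t + - L * (x - t) <= f x).
      { apply (derive_ge_increment f df); [lra | intros y Hy; apply Hdf; lra |].
        intros y Hy. apply Hf. lra. }
      nra. }
    assert (HFmono : F t <= F T + 0 * (t - T)).
    { apply (derive_le_increment F (fun x => - f x)); [lra | intros y Hy; apply HdF; lra |].
      intros y Hy. pose proof (Hf y ltac:(lra)). lra. }
    assert (HFdrop : F (t + h) <= F t + - (c / 2) * (t + h - t)).
    { apply (derive_le_increment F (fun x => - f x)); [lra | intros y Hy; apply HdF; lra |].
      intros y Hy. pose proof (Hhalf y Hy). lra. }
    exists (t + h). split; lra. }
  assert (Hiter : forall n, exists t, 0 <= t /\ F t <= F 0 - INR n * (c / 2 * h)).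
  { induction n as [|n [t [Ht HFt]]].
    - exists 0. simpl. lra.
    - destruct (Hdrop t Ht) as [t' [Ht' HFt']]. exists t'. rewrite S_INR. lra. }
  destruct (INR_archimed (c / 2 * h) (F 0)) as [n Hn]; [nra|].
  destruct (Hiter n) as [t [Ht HFt]]. pose proof (HF t Ht). lra.
Qed.

Lemma is_max_on_nonneg_of_eventually_lt (f : R -> R) (T : R) : 0 <= T ->
  (forall t, 0 <= t <= T -> continuity_pt f t) ->
  (forall t, T <= t -> f t < f 0) ->
  exists m, is_max_on_nonneg f m.
Proof.
  intros HT Hc Hlt. destruct (continuity_ab_maj f 0 T HT Hc) as [t [Hmax Ht]].
  exists (f t), t. split; [lra|]. split; [reflexivity|].
  intros t' Ht'. destruct (Rle_dec t' T) as [HtT | HtT].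
  - apply Hmax. lra.
  - pose proof (Hlt t' ltac:(lra)). pose proof (Hmax 0 ltac:(lra)). lra.
Qed.

Lemma ln_le_sub1 (x : R) : 0 < x -> ln x <= x - 1.
Proof.
  intros Hx. rewrite <- (ln_exp (x - 1)). apply ln_le; [exact Hx|].
  pose proof (exp_ineq1_le (x - 1)). lra.
Qed.

Lemma ln_lt_sub1 (x : R) : 0 < x -> x <> 1 -> ln x < x - 1.
Proof.
  intros Hx Hx1. rewrite <- (ln_exp (x - 1)). apply ln_increasing; [exact Hx|].
  pose proof (exp_ineq1 (x - 1) ltac:(lra)). lra.
Qed.

Lemma inv_one_add_bounds (k : R) : 0 <= k -> 0 < 1 / (1 + k) <= 1.
Proof.
  intros Hk. rewrite Rdiv_1_l. split; [apply Rinv_0_lt_compat; lra|].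
  assert (Hle : / (1 + k) <= / 1) by (apply Rinv_le_contravar; lra).
  now rewrite Rinv_1 in Hle.
Qed.

Lemma inv_one_add_lt1 (k : R) : 0 < k -> 1 / (1 + k) < 1.
Proof.
  intros Hk. rewrite Rdiv_1_l.
  assert (Hlt : / (1 + k) < / 1) by (apply Rinv_lt_contravar; lra).
  now rewrite Rinv_1 in Hlt.
Qed.

(* [i + sir_phi R0 s] is the classical SIR first integral. *)
Definition sir_phi (R0 x : R) : R := x - ln x / R0.

Definition sir_peak (R0 s0 i0 : R) : R := i0 + sir_phi R0 s0 - sir_phi R0 (/ R0).

Lemma is_derive_sir_phi (R0 x : R) : 0 < R0 -> 0 < x ->
  is_derive (sir_phi R0) x (1 - / (R0 * x)).
Proof. intros HR Hx. unfold sir_phi. auto_derive; [lra | field; lra]. Qed.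

Lemma sir_phi_sub_min (R0 x : R) : 0 < R0 -> 0 < x ->
  R0 * (sir_phi R0 x - sir_phi R0 (/ R0)) = R0 * x - 1 - ln (R0 * x).
Proof.
  intros HR Hx. unfold sir_phi. rewrite ln_Rinv, ln_mult by lra. field. lra.
Qed.

Lemma sir_phi_ge_min (R0 x : R) : 0 < R0 -> 0 < x -> sir_phi R0 (/ R0) <= sir_phi R0 x.
Proof.
  intros HR Hx. pose proof (sir_phi_sub_min R0 x HR Hx).
  pose proof (ln_le_sub1 (R0 * x) ltac:(nra)). nra.
Qed.

Lemma sir_phi_gt_min (R0 x : R) : 0 < R0 -> 0 < x -> R0 * x <> 1 ->
  sir_phi R0 (/ R0) < sir_phi R0 x.
Proof.
  intros HR Hx Hx1. pose proof (sir_phi_sub_min R0 x HR Hx).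
  pose proof (ln_lt_sub1 (R0 * x) ltac:(nra) Hx1). nra.
Qed.

Section Solution.

Variables (R0 : R) (kappa : R -> R) (s0 i0 : R) (s i : R -> R).
Hypothesis HR0 : 0 < R0.
Hypothesis Hsol : fSIR_solution R0 kappa s0 i0 s i.

Lemma is_derive_sir_total (t : R) : 0 <= t ->
  is_derive (fun u => s u + i u) t (- i t).
Proof.
  intros Ht. destruct Hsol as (_ & _ & Hd). destruct (Hd t Ht) as [Hs Hi].
  eapply is_derive_value; [exact (is_derive_plus s i t _ _ Hs Hi)|].
  unfold plus; simpl. ring.
Qed.

Lemma is_derive_sir_energy (t : R) : 0 <= t -> 0 < s t ->
  is_derive (fun u => i u + sir_phi R0 (s u)) t (- i t * (1 - 1 / (1 + kappa (i t)))).
Proof.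
  intros Ht Hst. destruct Hsol as (_ & _ & Hd). destruct (Hd t Ht) as [Hs Hi].
  eapply is_derive_value.
  - apply (is_derive_plus i (fun u => sir_phi R0 (s u)) t); [exact Hi|].
    apply (is_derive_comp (sir_phi R0) s); [exact (is_derive_sir_phi R0 (s t) HR0 Hst) | exact Hs].
  - unfold plus, scal; simpl; unfold mult; simpl.
    set (K := 1 / (1 + kappa (i t))). field. lra.
Qed.

End Solution.

Section Mitigated.

Variables (R0 : R) (kappa : R -> R) (s0 i0 : R) (s i : R -> R).
Hypothesis HR0 : 0 < R0.
Hypothesis Hk_nonneg : forall x, 0 <= x <= 1 -> 0 <= kappa x.
Hypothesis Hk_pos : forall x, 0 < x <= 1 -> 0 < kappa x.
Hypothesis Hs0 : 0 < s0.
Hypothesis Hi0 : 0 < i0.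
Hypothesis Hr0 : s0 + i0 <= 1.
Hypothesis Hs0_ne : R0 * s0 <> 1.
Hypothesis Hsol : fSIR_solution R0 kappa s0 i0 s i.
Hypothesis Hnonneg : forall t, 0 <= t -> 0 <= s t /\ 0 <= i t.

Lemma fsir_bounds (t : R) : 0 <= t -> 0 <= s t <= 1 /\ 0 <= i t <= 1.
Proof.
  intros Ht. destruct Hsol as (Hs0e & Hi0e & _).
  assert (Hsum : s t + i t <= s 0 + i 0 + 0 * (t - 0)).
  { apply (derive_le_increment (fun u => s u + i u) (fun u => - i u)); [lra | |].
    - intros u Hu. apply (is_derive_sir_total R0 kappa s0 i0 s i Hsol). lra.
    - intros u Hu. pose proof (Hnonneg u ltac:(lra)). lra. }
  pose proof (Hnonneg t Ht). lra.
Qed.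

Lemma fsir_rate_bounds (t : R) : 0 <= t -> 0 < 1 / (1 + kappa (i t)) <= 1.
Proof. intros Ht. apply inv_one_add_bounds, Hk_nonneg, fsir_bounds, Ht. Qed.

Lemma fsir_infection_rate_nonneg (t : R) : 0 <= t ->
  0 <= R0 * (1 / (1 + kappa (i t))) * s t.
Proof.
  intros Ht. pose proof (fsir_rate_bounds t Ht). pose proof (fsir_bounds t Ht).
  apply Rmult_le_pos; [apply Rmult_le_pos|]; lra.
Qed.

Lemma fsir_i_pos (t : R) : 0 <= t -> 0 < i t.
Proof.
  intros Ht. destruct Hsol as (_ & Hi0e & Hd).
  apply (linear_ode_pos i (fun u => R0 * (1 / (1 + kappa (i u))) * s u - 1) 1 t); [| | lra | lra].
  - intros u Hu. apply (Hd u). lra.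
  - intros u Hu. pose proof (fsir_infection_rate_nonneg u ltac:(lra)). lra.
Qed.

Lemma fsir_s_pos (t : R) : 0 <= t -> 0 < s t.
Proof.
  intros Ht. destruct Hsol as (Hs0e & _ & Hd).
  apply (linear_ode_pos s (fun u => - R0 * (1 / (1 + kappa (i u))) * i u) R0 t); [| | lra | lra].
  - intros u Hu. eapply is_derive_value; [apply (Hd u); lra | ring].
  - intros u Hu. pose proof (fsir_rate_bounds u ltac:(lra)). pose proof (fsir_bounds u ltac:(lra)).
    assert (1 / (1 + kappa (i u)) * i u <= 1) by nra. nra.
Qed.

Lemma fsir_energy_decreasing (t : R) : 0 < t ->
  i t + sir_phi R0 (s t) < i0 + sir_phi R0 s0.
Proof.
  intros Ht. destruct Hsol as (Hs0e & Hi0e & _). rewrite <- Hs0e, <- Hi0e.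
  apply (derive_neg_decreasing (fun u => i u + sir_phi R0 (s u))
           (fun u => - i u * (1 - 1 / (1 + kappa (i u))))); [exact Ht | |].
  - intros x Hx. apply (is_derive_sir_energy R0 kappa s0 i0 s i HR0 Hsol); [lra|].
    apply fsir_s_pos. lra.
  - intros x Hx. pose proof (fsir_i_pos x ltac:(lra)). pose proof (fsir_bounds x ltac:(lra)).
    pose proof (inv_one_add_lt1 (kappa (i x)) (Hk_pos (i x) ltac:(lra))). nra.
Qed.

Lemma fsir_i_lt_peak (t : R) : 0 <= t -> i t < sir_peak R0 s0 i0.
Proof.
  intros Ht. unfold sir_peak.
  pose proof (sir_phi_ge_min R0 (s t) HR0 (fsir_s_pos t Ht)).
  destruct (Req_dec t 0) as [-> | Ht0].
  - destruct Hsol as (_ & Hi0e & _). rewrite Hi0e.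
    pose proof (sir_phi_gt_min R0 s0 HR0 Hs0 Hs0_ne). lra.
  - pose proof (fsir_energy_decreasing t ltac:(lra)). lra.
Qed.

Lemma fsir_i_eventually_lt : exists T, 0 <= T /\ forall t, T <= t -> i t < i0.
Proof.
  destruct Hsol as (_ & _ & Hd).
  apply (eventually_lt_of_bounded_antiderivative (fun u => s u + i u) i
           (fun u => (R0 * (1 / (1 + kappa (i u))) * s u - 1) * i u) 1 i0); [lra | exact Hi0 | | | |].
  - intros t Ht. exact (is_derive_sir_total R0 kappa s0 i0 s i Hsol t Ht).
  - intros t Ht. apply (Hd t Ht).
  - intros t Ht. pose proof (fsir_infection_rate_nonneg t Ht). pose proof (fsir_bounds t Ht). nra.
  - intros t Ht. pose proof (Hnonneg t Ht). lra.
Qed.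

Lemma fsir_peak_lt_sir_peak : exists imax, is_max_on_nonneg i imax /\ imax < sir_peak R0 s0 i0.
Proof.
  destruct fsir_i_eventually_lt as [T [HT HTi]].
  destruct (is_max_on_nonneg_of_eventually_lt i T HT) as [imax Hmax].
  - intros t Ht. destruct Hsol as (_ & _ & Hd).
    exact (is_derive_continuity_pt i t _ (proj2 (Hd t ltac:(lra)))).
  - destruct Hsol as (_ & Hi0e & _). rewrite Hi0e. exact HTi.
  - exists imax. split; [exact Hmax|].
    destruct Hmax as (t & Ht & <- & _). exact (fsir_i_lt_peak t Ht).
Qed.

End Mitigated.

Section Classical.

Variables (R0 s0 i0 : R) (s i : R -> R).
Hypothesis HR0 : 0 < R0.
Hypothesis Hi0 : 0 < i0.
Hypothesis Hthr : 1 < R0 * s0.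
Hypothesis Hsol : fSIR_solution R0 (fun _ => 0) s0 i0 s i.

Lemma sir_derivatives (t : R) : 0 <= t ->
  is_derive s t (- R0 * i t * s t) /\ is_derive i t ((R0 * s t - 1) * i t).
Proof.
  intros Ht. destruct Hsol as (_ & _ & Hd). destruct (Hd t Ht) as [Hs Hi].
  split; eapply is_derive_value; [exact Hs | field | exact Hi | field].
Qed.

Lemma sir_continuity_pt (t : R) : 0 <= t -> continuity_pt s t /\ continuity_pt i t.
Proof.
  intros Ht. destruct (sir_derivatives t Ht) as [Hs Hi].
  split; eapply is_derive_continuity_pt; [exact Hs | exact Hi].
Qed.

Lemma sir_pos (t : R) : 0 <= t -> 0 < s t /\ 0 < i t.
Proof.
  intros Ht. destruct Hsol as (Hs0e & Hi0e & _).
  destruct (continuity_ab_min s 0 t Ht) as [ms [Hms Hmsr]].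
  { intros u Hu. apply sir_continuity_pt. lra. }
  destruct (continuity_ab_maj i 0 t Ht) as [Mi [HMi HMir]].
  { intros u Hu. apply sir_continuity_pt. lra. }
  split.
  - apply (linear_ode_pos s (fun u => - R0 * i u) (R0 * i Mi) t); [| | rewrite Hs0e; nra | lra].
    + intros u Hu. apply sir_derivatives. lra.
    + intros u Hu. pose proof (HMi u Hu). nra.
  - apply (linear_ode_pos i (fun u => R0 * s u - 1) (1 - R0 * s ms) t); [| | lra | lra].
    + intros u Hu. apply sir_derivatives. lra.
    + intros u Hu. pose proof (Hms u Hu). nra.
Qed.

Lemma sir_energy_constant (t : R) : 0 <= t ->
  i t + sir_phi R0 (s t) = i0 + sir_phi R0 s0.
Proof.
  intros Ht. destruct Hsol as (Hs0e & Hi0e & _). rewrite <- Hs0e, <- Hi0e.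
  apply (derive_zero_constant (fun u => i u + sir_phi R0 (s u))); [exact Ht|].
  intros x Hx. eapply is_derive_value.
  - apply (is_derive_sir_energy R0 (fun _ => 0) s0 i0 s i HR0 Hsol); [lra|].
    apply sir_pos. lra.
  - field.
Qed.

(* If [s] stayed above [1 / R0] up to [t1], then [i >= i0] there and [s + i] would become negative. *)
Lemma sir_s_reaches_threshold : exists z, 0 <= z /\ s z = / R0.
Proof.
  destruct Hsol as (Hs0e & Hi0e & _).
  assert (Hinv : R0 * / R0 = 1) by (apply Rinv_r; lra).
  set (t1 := 2 * (s0 + i0) / i0).
  assert (Ht1 : 0 < t1 /\ i0 * t1 = 2 * (s0 + i0)).
  { unfold t1. split; [apply Rdiv_lt_0_compat; nra | field; lra]. }
  assert (Hbelow : s t1 < / R0).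
  { apply Rnot_le_lt. intros Habove.
    assert (Hs_above : forall x, 0 <= x <= t1 -> / R0 <= s x).
    { intros x Hx. assert (s t1 <= s x + 0 * (t1 - x)); [|lra].
      apply (derive_le_increment s (fun u => - R0 * i u * s u)); [lra | |].
      - intros u Hu. apply sir_derivatives. lra.
      - intros u Hu. pose proof (sir_pos u ltac:(lra)). assert (0 < i u * s u) by nra. nra. }
    assert (Hi_above : forall x, 0 <= x <= t1 -> i0 <= i x).
    { intros x Hx. rewrite <- Hi0e. assert (i 0 + 0 * (x - 0) <= i x); [|lra].
      apply (derive_ge_increment i (fun u => (R0 * s u - 1) * i u)); [lra | |].
      - intros u Hu. apply sir_derivatives. lra.
      - intros u Hu. pose proof (sir_pos u ltac:(lra)).
        assert (1 <= R0 * s u) by (rewrite <- Hinv; apply Rmult_le_compat_l; [lra | apply Hs_above; lra]).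
        nra. }
    assert (Hsum : s t1 + i t1 <= s 0 + i 0 + - i0 * (t1 - 0)).
    { apply (derive_le_increment (fun u => s u + i u) (fun u => - i u)); [lra | |].
      - intros u Hu. exact (is_derive_sir_total R0 (fun _ => 0) s0 i0 s i Hsol u ltac:(lra)).
      - intros u Hu. pose proof (Hi_above u Hu). lra. }
    pose proof (sir_pos t1 ltac:(lra)). pose proof (sir_pos 0 ltac:(lra)). nra. }
  destruct (Ranalysis5.IVT_interv (fun u => / R0 - s u) 0 t1) as [z [Hz Hsz]]; [| lra | | lra |].
  - intros u Hu. apply continuity_pt_minus; [apply continuity_pt_const; now intros ? ?|].
    apply sir_continuity_pt. lra.
  - rewrite Hs0e. nra.
  - exists z. split; lra.
Qed.

Lemma sir_peak_attained : is_max_on_nonneg i (sir_peak R0 s0 i0).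
Proof.
  destruct sir_s_reaches_threshold as [z [Hz Hsz]].
  exists z. unfold sir_peak. split; [exact Hz|]. split.
  - pose proof (sir_energy_constant z Hz) as HE. rewrite Hsz in HE. lra.
  - intros t Ht. pose proof (sir_energy_constant t Ht).
    pose proof (sir_phi_ge_min R0 (s t) HR0 (proj1 (sir_pos t Ht))). lra.
Qed.

End Classical.

Theorem proposition2
  (R0 : R) (kappa : R -> R) (s0 i0 : R)
  (s i s_cl i_cl : R -> R)
  (HR0 : 0 < R0)
  (Hk_nonneg : forall x, 0 <= x <= 1 -> 0 <= kappa x)
  (Hk_mono : forall x y, 0 <= x -> x <= y -> y <= 1 -> kappa x <= kappa y)
  (Hk0 : kappa 0 = 0)
  (Hk_pos : forall x, 0 < x <= 1 -> 0 < kappa x)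
  (Hs0 : 0 <= s0) (Hi0 : 0 < i0) (Hr0 : s0 + i0 <= 1)
  (Hthr : s0 * R0 > 1 + kappa i0)
  (Hsol : fSIR_solution R0 kappa s0 i0 s i)
  (Hnonneg : forall t, 0 <= t -> 0 <= s t /\ 0 <= i t)
  (Hsol_cl : fSIR_solution R0 (fun _ => 0) s0 i0 s_cl i_cl) :
  exists imax i0max,
    is_max_on_nonneg i imax /\ is_max_on_nonneg i_cl i0max /\ imax < i0max.
Proof.
  assert (Hk_i0 : 0 <= kappa i0) by (apply Hk_nonneg; lra).
  assert (Hs0_pos : 0 < s0) by nra.
  assert (Hthr_cl : 1 < R0 * s0) by lra.
  destruct (fsir_peak_lt_sir_peak R0 kappa s0 i0 s i HR0 Hk_nonneg Hk_pos Hs0_pos Hi0 Hr0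
              ltac:(lra) Hsol Hnonneg) as [imax [Hmax Hlt]].
  exists imax, (sir_peak R0 s0 i0).
  split; [exact Hmax|]. split; [|exact Hlt].
  exact (sir_peak_attained R0 s0 i0 s_cl i_cl HR0 Hi0 Hthr_cl Hsol_cl).
Qed.
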